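(* Let $G$ be a countable vertex set and let $c,b$ be conductance functions on $G$ with $b_{xy}\le c_{xy}$ for all $x,y$, such that $(G,c)$ and $(G,b)$ are connected locally finite networks. Then the inclusion map $\mathcal I:\mathcal H_{\mathcal E_c}\to\mathcal H_{\mathcal E_b}$ is injective.
   Context: A conductance function on a countable set $G$ is a symmetric map $c:G\times G\to[0,\infty)$ with $c_{xx}=0$; $x\sim y$ iff $c_{xy}>0$; locally finite and connected (any two vertices joined by a finite path). $\mathcal E_c(u,v)=\frac12\sum_{x,y}c_{xy}\overline{(u(x)-u(y))}(v(x)-v(y))$, and $\mathcal H_{\mathcal E_c}$ is the Hilbert space of functions $u:G\to\mathbb C$ with $\mathcal E_c(u,u)<\infty$ modulo constants, with inner product $\mathcal E_c$. Same for $b$. $\mathcal I$ sends the class of $u$ in $\mathcal H_{\mathcal E_c}$ to its class in $\mathcal H_{\mathcal E_b}$. *)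

From HB Require Import structures.
From mathcomp Require Import all_boot all_order all_algebra.
From mathcomp Require Import all_classical all_reals.
From mathcomp Require Import ereal esum.
From mathcomp.real_closed Require complex.
Import complex.ComplexField.
Set Implicit Arguments. Unset Strict Implicit. Unset Printing Implicit Defensive.
Import Order.TTheory GRing.Theory Num.Theory.
Local Open Scope ring_scope.
Local Open Scope classical_set_scope.

Notation Cplx R := (complex.complex R).

Definition sqmod (R : realType) (z : Cplx R) : R :=
  complex.Re z ^+ 2 + complex.Im z ^+ 2.

Definition conductance (R : realType) (G : Type) (c : G -> G -> R) : Prop :=
  (forall x y, 0 <= c x y) /\ (forall x y, c x y = c y x) /\ (forall x, c x x = 0).

Definition adj (R : realType) (G : Type) (c : G -> G -> R) : rel G :=
  fun x y => 0 < c x y.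

Definition locally_finite (R : realType) (G : Type) (c : G -> G -> R) : Prop :=
  forall x, finite_set [set y | adj c x y].

Definition connected_net (R : realType) (G : eqType) (c : G -> G -> R) : Prop :=
  forall x y, exists s : seq G, path (adj c) x s && (last x s == y).

Definition energy (R : realType) (G : choiceType) (c : G -> G -> R) (u : G -> Cplx R)
  : \bar R :=
  \esum_(p in [set: G * G]) ((c p.1 p.2 * sqmod (u p.1 - u p.2)) / 2)%:E.

Definition finite_energy (R : realType) (G : choiceType) (c : G -> G -> R)
  (u : G -> Cplx R) : Prop := (energy c u < +oo)%E.

(* the element of H_{E_c} represented by u: its class modulo constants,
   inside the space of finite-energy functions *)
Definition HE_class (R : realType) (G : choiceType) (c : G -> G -> R)
  (u : G -> Cplx R) : set (G -> Cplx R) :=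
  [set v | finite_energy c v /\ exists k : Cplx R, forall x, v x = u x + k].

Definition incl_map (R : realType) (G : choiceType) (b : G -> G -> R)
  (u : G -> Cplx R) : set (G -> Cplx R) := HE_class b u.

(* Both quotients identify functions that differ by a constant, and finite
   c-energy implies finite b-energy since b <= c.  Hence if [u]_b = [v]_b,
   then u itself lies in [v]_b, so u - v is constant and [u]_c = [v]_c. *)

From HB Require Import structures.
From mathcomp Require Import all_boot all_order all_algebra.
From mathcomp Require Import all_classical all_reals.
From mathcomp Require Import ereal esum.
From mathcomp.real_closed Require complex.
Import complex.ComplexField.
Set Implicit Arguments. Unset Strict Implicit. Unset Printing Implicit Defensive.
Import Order.TTheory GRing.Theory Num.Theory.
Local Open Scope ring_scope.
Local Open Scope classical_set_scope.

Lemma sqmod_ge0 (R : realType) (z : Cplx R) : 0 <= sqmod z.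
Proof. by rewrite /sqmod addr_ge0 ?sqr_ge0. Qed.

Lemma energy_le (R : realType) (G : choiceType) (c b : G -> G -> R)
    (u : G -> Cplx R) :
  (forall x y, b x y <= c x y) -> (energy b u <= energy c u)%E.
Proof.
move=> le_bc; apply: le_esum => p _; rewrite lee_fin.
by rewrite ler_wpM2r ?invr_ge0 // ler_wpM2r ?sqmod_ge0.
Qed.

Lemma finite_energy_le (R : realType) (G : choiceType) (c b : G -> G -> R)
    (u : G -> Cplx R) :
  (forall x y, b x y <= c x y) -> finite_energy c u -> finite_energy b u.
Proof. by move=> le_bc; apply: le_lt_trans; apply: energy_le. Qed.

Lemma HE_class_refl (R : realType) (G : choiceType) (c : G -> G -> R)
    (u : G -> Cplx R) :
  finite_energy c u -> HE_class c u u.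
Proof. by move=> fu; split=> //; exists 0 => x; rewrite addr0. Qed.

Lemma HE_class_shift (R : realType) (G : choiceType) (c : G -> G -> R)
    (u v : G -> Cplx R) (k : Cplx R) :
  (forall x, u x = v x + k) -> HE_class c u = HE_class c v.
Proof.
move=> huv; apply/seteqP; split=> w [fw [l hl]]; split=> //.
- by exists (k + l) => x; rewrite hl huv addrA.
- by exists (l - k) => x; rewrite hl huv -addrA [k + _]addrC subrK.
Qed.

Theorem corollary3p7 (R : realType) (G : countType) (c b : G -> G -> R) :
  conductance c -> conductance b ->
  (forall x y, b x y <= c x y) ->
  locally_finite c -> connected_net c ->
  locally_finite b -> connected_net b ->
  forall u v : G -> Cplx R,
    finite_energy c u -> finite_energy c v ->
    incl_map b u = incl_map b v -> HE_class c u = HE_class c v.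
Proof.
move=> _ _ le_bc _ _ _ _ u v fu _ Iuv.
have : incl_map b u u := HE_class_refl (finite_energy_le le_bc fu).
rewrite Iuv => -[_ [k huv]].
exact: HE_class_shift huv.
Qed.
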